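(* Let $(G,\alpha,\mathcal A)$ and $(G,\beta,\mathcal B)$ be unital $C^*$-dynamical systems of a locally compact group $G$, let $E$ be a $\mathcal B$-$\mathcal A$ Hilbert bimodule which is full with respect to both inner products, and let $\eta$ be a $(\beta,\alpha)$-compatible action of $G$ on $E$. If $\alpha$ or $\beta$ is outer, then $\eta$ is outer.
   Context: A $\mathcal B$-$\mathcal A$ Hilbert bimodule $E$ is a left Hilbert $\mathcal B$-module (inner product ${}_{\mathcal B}\langle\cdot,\cdot\rangle$, linear in the first variable) and right Hilbert $\mathcal A$-module (inner product $\langle\cdot,\cdot\rangle_{\mathcal A}$) with ${}_{\mathcal B}\langle x,y\rangle z=x\langle y,z\rangle_{\mathcal A}$. Full means the inner products span dense subsets of $\mathcal B$, resp. $\mathcal A$. A $(\beta,\alpha)$-compatible action is a homomorphism $g\mapsto\eta_g$ into invertible linear maps of $E$ with $\eta_g(bx)=\beta_g(b)\eta_g(x)$, $\eta_g(xa)=\eta_g(x)\alpha_g(a)$, ${}_{\mathcal B}\langle\eta_gx,\eta_gy\rangle=\beta_g({}_{\mathcal B}\langle x,y\rangle)$, $\langle\eta_gx,\eta_gy\rangle_{\mathcal A}=\alpha_g(\langle x,y\rangle_{\mathcal A})$, and $g\mapsto\eta_g(x)$ continuous. For unitaries $u\in\mathcal A$, $u'\in\mathcal B$, $\mathrm{Ad}(u',u)(x):=u'^*xu$. The action $\eta$ is outer if for every $t\in G\setminus\{e\}$, $\eta_t\neq\mathrm{Ad}(u',u)$ for all unitaries $u\in\mathcal A$, $u'\in\mathcal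 B$. An action $\alpha$ on a unital $C^*$-algebra $\mathcal A$ is outer if for every $t\ne e$, $\alpha_t$ is not of the form $a\mapsto u^*au$ for a unitary $u\in\mathcal A$. *)

From mathcomp Require Import all_boot all_order all_algebra.
From mathcomp Require Import all_classical all_reals all_analysis.
From mathcomp Require Import complex.
Import Order.TTheory GRing.Theory Num.Theory.
Local Open Scope ring_scope.
Set Implicit Arguments.
Unset Strict Implicit.
Unset Printing Implicit Defensive.

Record unital_cstar (R : realType) := UnitalCstar {
  cs_sort :> completeNormedModType R[i];
  cs_mul : cs_sort -> cs_sort -> cs_sort;
  cs_one : cs_sort;
  cs_star : cs_sort -> cs_sort;
  cs_mulA : associative cs_mul;
  cs_mul1l : left_id cs_one cs_mul;
  cs_mul1r : right_id cs_one cs_mul;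
  cs_mulDl : left_distributive cs_mul +%R;
  cs_mulDr : right_distributive cs_mul +%R;
  cs_mulZl : forall (k : R[i]) a b, cs_mul (k *: a) b = k *: cs_mul a b;
  cs_mulZr : forall (k : R[i]) a b, cs_mul a (k *: b) = k *: cs_mul a b;
  cs_starK : involutive cs_star;
  cs_starD : forall a b, cs_star (a + b) = cs_star a + cs_star b;
  cs_starZ : forall (k : R[i]) a, cs_star (k *: a) = k^* *: cs_star a;
  cs_starM : forall a b, cs_star (cs_mul a b) = cs_mul (cs_star b) (cs_star a);
  cs_norm_mul : forall a b, `|cs_mul a b| <= `|a| * `|b|;
  cs_cstar_id : forall a, `|cs_mul (cs_star a) a| = `|a| ^+ 2
}.

Arguments cs_mul {R A} : rename.
Arguments cs_one {R} A : rename.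
Arguments cs_star {R A} : rename.

Definition unitary (R : realType) (A : unital_cstar R) (u : A) : Prop :=
  cs_mul (cs_star u) u = cs_one A /\ cs_mul u (cs_star u) = cs_one A.

Definition cs_positive (R : realType) (A : unital_cstar R) (a : A) : Prop :=
  exists c : A, a = cs_mul (cs_star c) c.

Definition star_automorphism (R : realType) (A : unital_cstar R) (f : A -> A)
  : Prop :=
  [/\ forall (k : R[i]) (a b : A), f (k *: a + b) = k *: f a + f b,
      forall a b : A, f (cs_mul a b) = cs_mul (f a) (f b),
      f (cs_one A) = cs_one A,
      forall a : A, f (cs_star a) = cs_star (f a)
    & bijective f].

Record lc_group := LCGroup {
  lg_sort :> topologicalType;
  lg_mul : lg_sort -> lg_sort -> lg_sort;
  lg_inv : lg_sort -> lg_sort;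
  lg_one : lg_sort;
  lg_mulA : associative lg_mul;
  lg_mul1 : left_id lg_one lg_mul;
  lg_mulV : forall g, lg_mul (lg_inv g) g = lg_one;
  lg_mul_cont : continuous (fun p : lg_sort * lg_sort => lg_mul p.1 p.2);
  lg_inv_cont : continuous lg_inv;
  lg_hausdorff : hausdorff_space lg_sort;
  lg_locally_compact :
    forall x : lg_sort, exists2 K : set lg_sort, compact K & nbhs x K
}.

Arguments lg_mul {G} : rename.
Arguments lg_one G : rename.

Definition cstar_action (R : realType) (G : lc_group) (A : unital_cstar R)
  (alpha : G -> A -> A) : Prop :=
  [/\ forall g, star_automorphism (alpha g),
      forall g h, alpha (lg_mul g h) = alpha g \o alpha h
    & forall a : A, continuous (fun g => alpha g a)].

Definition outer_action (R : realType) (G : lc_group) (A : unital_cstar R)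
  (alpha : G -> A -> A) : Prop :=
  forall t : G, t <> lg_one G ->
    ~ exists u : A, unitary u /\ alpha t = (fun a => cs_mul (cs_star u) (cs_mul a u)).

(* Completeness of a C-vector space with respect to the norm           *)
(* x |-> ||ip x x||^(1/2) (stated with ||ip x x|| itself, equivalently)  *)
Definition ip_complete (R : realType) (E : lmodType R[i]) (A : unital_cstar R)
  (ip : E -> E -> A) : Prop :=
  forall u : nat -> E,
    (forall eps : R[i], 0 < eps -> exists N : nat, forall m n : nat,
        (N <= m)%N -> (N <= n)%N -> `|ip (u m - u n) (u m - u n)| < eps) ->
    exists l : E, forall eps : R[i], 0 < eps -> exists N : nat, forall n : nat,
        (N <= n)%N -> `|ip (u n - l) (u n - l)| < eps.

Record hilbert_bimodule (R : realType) (B A : unital_cstar R) := HilbertBimodule {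
  hb_sort :> lmodType R[i];
  hb_lact : B -> hb_sort -> hb_sort;
  hb_ract : hb_sort -> A -> hb_sort;
  hb_lip : hb_sort -> hb_sort -> B;
  hb_rip : hb_sort -> hb_sort -> A;
  hb_ractDl : forall x y a, hb_ract (x + y) a = hb_ract x a + hb_ract y a;
  hb_ractDr : forall x a a', hb_ract x (a + a') = hb_ract x a + hb_ract x a';
  hb_ractZl : forall (k : R[i]) x a, hb_ract (k *: x) a = k *: hb_ract x a;
  hb_ractZr : forall (k : R[i]) x a, hb_ract x (k *: a) = k *: hb_ract x a;
  hb_ractM : forall x a a', hb_ract x (cs_mul a a') = hb_ract (hb_ract x a) a';
  hb_ract1 : forall x, hb_ract x (cs_one A) = x;
  hb_lactDl : forall b b' x, hb_lact (b + b') x = hb_lact b x + hb_lact b' x;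
  hb_lactDr : forall b x y, hb_lact b (x + y) = hb_lact b x + hb_lact b y;
  hb_lactZl : forall (k : R[i]) b x, hb_lact (k *: b) x = k *: hb_lact b x;
  hb_lactZr : forall (k : R[i]) b x, hb_lact b (k *: x) = k *: hb_lact b x;
  hb_lactM : forall b b' x, hb_lact (cs_mul b b') x = hb_lact b (hb_lact b' x);
  hb_lact1 : forall x, hb_lact (cs_one B) x = x;
  hb_lract : forall b x a, hb_ract (hb_lact b x) a = hb_lact b (hb_ract x a);
  hb_ripD : forall x y z, hb_rip x (y + z) = hb_rip x y + hb_rip x z;
  hb_ripZ : forall (k : R[i]) x y, hb_rip x (k *: y) = k *: hb_rip x y;
  hb_ripM : forall x y a, hb_rip x (hb_ract y a) = cs_mul (hb_rip x y) a;
  hb_ripC : forall x y, hb_rip y x = cs_star (hb_rip x y);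
  hb_rip_pos : forall x, cs_positive (hb_rip x x);
  hb_rip_def : forall x, hb_rip x x = 0 -> x = 0;
  hb_rip_complete : ip_complete hb_rip;
  hb_lipD : forall x y z, hb_lip (x + y) z = hb_lip x z + hb_lip y z;
  hb_lipZ : forall (k : R[i]) x y, hb_lip (k *: x) y = k *: hb_lip x y;
  hb_lipM : forall b x y, hb_lip (hb_lact b x) y = cs_mul b (hb_lip x y);
  hb_lipC : forall x y, hb_lip y x = cs_star (hb_lip x y);
  hb_lip_pos : forall x, cs_positive (hb_lip x x);
  hb_lip_def : forall x, hb_lip x x = 0 -> x = 0;
  hb_lip_complete : ip_complete hb_lip;
  hb_compat : forall x y z, hb_lact (hb_lip x y) z = hb_ract x (hb_rip y z)
}.

Arguments hb_lact {R B A E} : rename.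
Arguments hb_ract {R B A E} : rename.
Arguments hb_lip {R B A} E : rename.
Arguments hb_rip {R B A} E : rename.

Definition ip_full (R : realType) (E : lmodType R[i]) (A : unital_cstar R)
  (ip : E -> E -> A) : Prop :=
  forall (a : A) (eps : R[i]), 0 < eps ->
    exists s : seq (E * E), `|a - \sum_(p <- s) ip p.1 p.2| < eps.

Record compatible_action (R : realType) (G : lc_group) (A B : unital_cstar R)
  (E : hilbert_bimodule B A) (alpha : G -> A -> A) (beta : G -> B -> B)
  (eta : G -> E -> E) : Prop := CompatibleAction {
  ca_hom : forall g h, eta (lg_mul g h) = eta g \o eta h;
  ca_linear : forall g (k : R[i]) (x y : E), eta g (k *: x + y) = k *: eta g x + eta g y;
  ca_bij : forall g, bijective (eta g);
  ca_lact : forall g b x, eta g (hb_lact b x) = hb_lact (beta g b) (eta g x);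
  ca_ract : forall g x a, eta g (hb_ract x a) = hb_ract (eta g x) (alpha g a);
  ca_lip : forall g x y, hb_lip E (eta g x) (eta g y) = beta g (hb_lip E x y);
  ca_rip : forall g x y, hb_rip E (eta g x) (eta g y) = alpha g (hb_rip E x y);
  ca_cont : forall (x : E) (g : G) (eps : R[i]), 0 < eps ->
    \forall h \near g,
      `|hb_rip E (eta h x - eta g x) (eta h x - eta g x)| < eps
}.

Definition Ad (R : realType) (B A : unital_cstar R) (E : hilbert_bimodule B A)
  (u' : B) (u : A) : E -> E :=
  fun x => hb_ract (hb_lact (cs_star u') x) u.

Arguments Ad {R B A} E u' u.

Definition outer_bimod_action (R : realType) (G : lc_group) (A B : unital_cstar R)
  (E : hilbert_bimodule B A) (eta : G -> E -> E) : Prop :=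
  forall t : G, t <> lg_one G ->
    forall (u : A) (u' : B), unitary u -> unitary u' -> eta t <> Ad E u' u.

(* If [eta_t = Ad(u', u)], then [alpha_t <x, y>_A = u^* <x, y>_A u] for all
   [x, y], because the left action is adjointable for the right inner product.
   The right inner products form a left ideal, and fullness puts an element of
   their span within distance 1 of the unit, so no nonzero element annihilates
   the ideal; multiplicativity then forces [alpha_t = Ad u]. The left-hand
   case is symmetric. *)
From mathcomp Require Import all_boot all_order all_algebra.
From mathcomp Require Import all_classical all_reals all_analysis.
From mathcomp Require Import complex.
Import Order.TTheory GRing.Theory Num.Theory.
Local Open Scope ring_scope.
Set Implicit Arguments.
Unset Strict Implicit.
Unset Printing Implicit Defensive.

Section UnitalCstar.
Variables (R : realType) (A : unital_cstar R).
Implicit Types a b c j u : A.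

Lemma cs_mulr0 a : cs_mul a 0 = 0.
Proof. by rewrite -(scale0r (0 : A)) cs_mulZr !scale0r. Qed.

Lemma cs_mul0r a : cs_mul 0 a = 0.
Proof. by rewrite -(scale0r (0 : A)) cs_mulZl !scale0r. Qed.

Lemma cs_mulrBr a b c : cs_mul a (b - c) = cs_mul a b - cs_mul a c.
Proof. by rewrite cs_mulDr -scaleN1r cs_mulZr scaleN1r. Qed.

Lemma cs_mulrBl a b c : cs_mul (b - c) a = cs_mul b a - cs_mul c a.
Proof. by rewrite cs_mulDl -scaleN1r cs_mulZl scaleN1r. Qed.

Lemma cs_mulr_sumr (I : Type) (s : seq I) (F : I -> A) c :
  cs_mul c (\sum_(i <- s) F i) = \sum_(i <- s) cs_mul c (F i).
Proof. exact: (big_morph _ (cs_mulDr c) (cs_mulr0 c)). Qed.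

Lemma cs_mulr_suml (I : Type) (s : seq I) (F : I -> A) c :
  cs_mul (\sum_(i <- s) F i) c = \sum_(i <- s) cs_mul (F i) c.
Proof. exact: (big_morph (cs_mul^~ c) (fun x y => cs_mulDl x y c) (cs_mul0r c)). Qed.

Lemma norm_lt_self_eq0 c (k : R[i]) : `|c| <= `|c| * k -> k < 1 -> c = 0.
Proof.
move=> le_ck lt_k1; apply/eqP/negPn/negP => c_neq0.
have c_gt0 : 0 < `|c| by rewrite normr_gt0.
have ck_lt : `|c| * k < `|c| * 1 by rewrite ltr_pM2l.
by have := le_lt_trans le_ck ck_lt; rewrite mulr1 ltxx.
Qed.

(* [c = c (1 - j)], and right multiplication by [1 - j] is a strict contraction. *)
Lemma cs_mul_near1_eq0r c j :
  `|cs_one A - j| < 1 -> cs_mul c j = 0 -> c = 0.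
Proof.
move=> near1 cj0; apply: norm_lt_self_eq0 near1.
have {1}-> : c = cs_mul c (cs_one A - j) by rewrite cs_mulrBr cj0 cs_mul1r subr0.
exact: cs_norm_mul.
Qed.

Lemma cs_mul_near1_eq0l c j :
  `|cs_one A - j| < 1 -> cs_mul j c = 0 -> c = 0.
Proof.
move=> near1 jc0; apply: norm_lt_self_eq0 near1; rewrite mulrC.
have {1}-> : c = cs_mul (cs_one A - j) c by rewrite cs_mulrBl jc0 cs_mul1l subr0.
exact: cs_norm_mul.
Qed.

Lemma unitary_mulIr u a b : unitary u -> cs_mul a u = cs_mul b u -> a = b.
Proof. by move=> [_ uu1] eq_ab; rewrite -(cs_mul1r a) -(cs_mul1r b) -uu1 !cs_mulA eq_ab. Qed.

Section FullInnerProduct.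
Variables (E : lmodType R[i]) (ip : E -> E -> A).
Hypothesis full : ip_full ip.

Lemma ip_full_annihilator_r c : (forall x y, cs_mul c (ip x y) = 0) -> c = 0.
Proof.
move=> c_ann; have [s near1] := full (cs_one A) ltr01.
apply: (cs_mul_near1_eq0r near1).
by rewrite cs_mulr_sumr big1.
Qed.

Lemma ip_full_annihilator_l c : (forall x y, cs_mul (ip x y) c = 0) -> c = 0.
Proof.
move=> c_ann; have [s near1] := full (cs_one A) ltr01.
apply: (cs_mul_near1_eq0l near1).
by rewrite cs_mulr_suml big1.
Qed.

End FullInnerProduct.

Lemma multiplicative_eq_Ad_from_left_ideal (f : A -> A) (P : A -> Prop) u :
  unitary u -> {morph f : a b / cs_mul a b} ->
  (forall a r, P r -> P (cs_mul a r)) ->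
  (forall c, (forall r, P r -> cs_mul c r = 0) -> c = 0) ->
  (forall r, P r -> f r = cs_mul (cs_star u) (cs_mul r u)) ->
  f = (fun a => cs_mul (cs_star u) (cs_mul a u)).
Proof.
move=> u_unitary fM P_ideal P_sep f_Ad; apply: funext => a.
pose d := cs_mul (f a) (cs_star u) - cs_mul (cs_star u) a.
have d0 : d = 0.
  apply: P_sep => r Pr; rewrite cs_mulrBl; apply/eqP; rewrite subr_eq0; apply/eqP.
  apply: (unitary_mulIr u_unitary).
  have := f_Ad _ (P_ideal a _ Pr); rewrite fM (f_Ad _ Pr).
  by rewrite -!cs_mulA => ->.
have [uu1 _] := u_unitary.
move/eqP: d0; rewrite subr_eq0 => /eqP fau.
by rewrite -(cs_mul1r (f a)) -uu1 cs_mulA fau cs_mulA.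
Qed.

End UnitalCstar.

Section HilbertBimodule.
Variables (R : realType) (A B : unital_cstar R) (E : hilbert_bimodule B A).
Implicit Types x y : E.

Lemma rip_ractl x y (a : A) :
  hb_rip E (hb_ract x a) y = cs_mul (cs_star a) (hb_rip E x y).
Proof. by rewrite hb_ripC hb_ripM cs_starM -hb_ripC. Qed.

Lemma lip_lactr x y (b : B) :
  hb_lip E x (hb_lact b y) = cs_mul (hb_lip E x y) (cs_star b).
Proof. by rewrite hb_lipC hb_lipM cs_starM -hb_lipC. Qed.

Lemma hb_ractBr x (a a' : A) : hb_ract x (a - a') = hb_ract x a - hb_ract x a'.
Proof. by rewrite hb_ractDr -(scaleN1r a') hb_ractZr scaleN1r. Qed.

Lemma hb_lactBl x (b b' : B) : hb_lact (b - b') x = hb_lact b x - hb_lact b' x.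
Proof. by rewrite hb_lactDl -(scaleN1r b') hb_lactZl scaleN1r. Qed.

(* Both sides agree after acting on any [z <x', y'>_A = <z, x'>_B y'] thanks to
   the compatibility of the inner products; fullness then separates them. *)
Lemma rip_lact_adj (b : B) x y : ip_full (hb_rip E) ->
  hb_rip E (hb_lact b x) y = hb_rip E x (hb_lact (cs_star b) y).
Proof.
move=> full; apply/eqP; rewrite -subr_eq0; apply/eqP.
apply: (ip_full_annihilator_l full) => z w.
rewrite -hb_ripM hb_ractBr -!hb_compat lip_lactr hb_lactM subrr.
by rewrite -(scale0r (0 : E)) hb_ripZ scale0r.
Qed.

Lemma lip_ract_adj (a : A) x y : ip_full (hb_lip E) ->
  hb_lip E (hb_ract x a) y = hb_lip E x (hb_ract y (cs_star a)).
Proof.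
move=> full; apply/eqP; rewrite -subr_eq0; apply/eqP.
apply: (ip_full_annihilator_r full) => z w.
rewrite -hb_lipM hb_lactBl !hb_compat -hb_ractM rip_ractl cs_starK subrr.
by rewrite -(scale0r (0 : E)) hb_lipZ scale0r.
Qed.

Lemma rip_Ad (u : A) (u' : B) x y : unitary u' -> ip_full (hb_rip E) ->
  hb_rip E (Ad E u' u x) (Ad E u' u y)
  = cs_mul (cs_star u) (cs_mul (hb_rip E x y) u).
Proof.
move=> [_ u'u'1] full; rewrite /Ad rip_ractl hb_ripM rip_lact_adj //.
by rewrite cs_starK -hb_lactM u'u'1 hb_lact1.
Qed.

Lemma lip_Ad (u : A) (u' : B) x y : unitary u -> ip_full (hb_lip E) ->
  hb_lip E (Ad E u' u x) (Ad E u' u y)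
  = cs_mul (cs_star u') (cs_mul (hb_lip E x y) u').
Proof.
move=> [_ uu1] full; rewrite /Ad !hb_lract hb_lipM lip_lactr cs_starK.
by rewrite lip_ract_adj // -hb_ractM uu1 hb_ract1.
Qed.

Section InnerCompatibleAction.
Variables (G : lc_group) (alpha : G -> A -> A) (beta : G -> B -> B)
  (eta : G -> E -> E) (t : G) (u : A) (u' : B).
Hypotheses (eta_compat : compatible_action alpha beta eta)
  (u_unitary : unitary u) (u'_unitary : unitary u') (eta_Ad : eta t = Ad E u' u).

Lemma compatible_Ad_rinner : star_automorphism (alpha t) ->
  ip_full (hb_rip E) -> alpha t = (fun a => cs_mul (cs_star u) (cs_mul a u)).
Proof.
move=> [_ alphaM _ _ _] full.
apply: (multiplicative_eq_Ad_from_left_ideal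
  (P := fun r => exists x y, r = hb_rip E x y)) => //.
- move=> a _ [x [y ->]]; exists (hb_ract x (cs_star a)), y.
  by rewrite rip_ractl cs_starK.
- by move=> c c_ann; apply: (ip_full_annihilator_r full) => x y; apply: c_ann; exists x, y.
- by move=> _ [x [y ->]]; rewrite -(ca_rip eta_compat) eta_Ad rip_Ad.
Qed.

Lemma compatible_Ad_linner : star_automorphism (beta t) ->
  ip_full (hb_lip E) -> beta t = (fun b => cs_mul (cs_star u') (cs_mul b u')).
Proof.
move=> [_ betaM _ _ _] full.
apply: (multiplicative_eq_Ad_from_left_ideal
  (P := fun r => exists x y, r = hb_lip E x y)) => //.
- by move=> b _ [x [y ->]]; exists (hb_lact b x), y; rewrite hb_lipM.
- by move=> c c_ann; apply: (ip_full_annihilator_r full) => x y; apply: c_ann; exists x, y.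
- by move=> _ [x [y ->]]; rewrite -(ca_lip eta_compat) eta_Ad lip_Ad.
Qed.

End InnerCompatibleAction.

End HilbertBimodule.

Theorem proposition5p2 (R : realType) (G : lc_group) (A B : unital_cstar R)
  (alpha : G -> A -> A) (beta : G -> B -> B)
  (E : hilbert_bimodule B A) (eta : G -> E -> E) :
  cstar_action alpha -> cstar_action beta ->
  ip_full (hb_lip E) -> ip_full (hb_rip E) ->
  compatible_action alpha beta eta ->
  outer_action alpha \/ outer_action beta ->
  outer_bimod_action eta.
Proof.
move=> [alpha_aut _ _] [beta_aut _ _] fullL fullR eta_compat outer t t_neq1 u u'
  u_unitary u'_unitary eta_Ad.
case: outer => [alpha_outer | beta_outer].
- apply: (alpha_outer t t_neq1); exists u; split => //.
  exact: (compatible_Ad_rinner eta_compat u_unitary u'_unitary eta_Ad).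
- apply: (beta_outer t t_neq1); exists u'; split => //.
  exact: (compatible_Ad_linner eta_compat u_unitary u'_unitary eta_Ad).
Qed.
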